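(* For every $B\in B_{2n}(P_{2n})$ (i.e. every lower unitriangular symplectic $2n\times 2n$ matrix over $\mathbb{F}$), $$B=S_{2n,V_n(B)e_{n,1},1}\,S_{2n,V_n(B)e_{n,2},2}\cdots S_{2n,V_n(B)e_{n,n},n}.$$
   Context: $\mathbb{F}$ is the field with two elements, $e_{N,i}$ the $i$-th standard basis column vector of $\mathbb{F}^N$, $I_N$ the identity, $[N]=\{1,\dots,N\}$. $R_{2n}=\sum_{i=1}^{2n}e_{2n,i}e_{2n,2n+1-i}^{\top}$; $\mathrm{Sp}_{2n}=\{C\in\mathbb{F}^{2n\times2n}:C^{\top}R_{2n}C=R_{2n}\}$. $P_{2n}=\{(i,j):i,j\in[2n],i>j\}$ and $B_{2n}(P_{2n})=\big(I_{2n}+\mathrm{span}\{e_{2n,i}e_{2n,j}^{\top}:(i,j)\in P_{2n}\}\big)\cap\mathrm{Sp}_{2n}$. For $i\in[2n]$ and $v=\sum_j v_je_{2n,j}\in\mathbb{F}^{2n}$ with $v_i=0$, $S_{2n,v,i}=I_{2n}+v e_{2n,i}^{\top}+R_{2n}e_{2n,i}v^{\top}R_{2n}+v_{2n+1-i}e_{2n,2n+1-i}e_{2n,i}^{\top}$. $V_n:\mathbb{F}^{2n\times2n}\to\mathbb{F}^{2n\times n}$ is the linear map $V_n(B)=\sum_{j=1}^n\sum_{i=j+1}^{2n+1-j}e_{2n,i}e_{2n,i}^{\top}Be_{2n,j}e_{n,j}^{\top}$ (so $V_n(B)e_{n,j}$ is the part of column $j$ of $B$ in rows $j+1,\dots,2n+1-j$,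 and has zero $j$-th entry). *)

From HB Require Import structures.
From mathcomp Require Import all_boot all_order all_algebra.
Set Implicit Arguments. Unset Strict Implicit. Unset Printing Implicit Defensive.
Import GRing.Theory.
Local Open Scope ring_scope.

(* Indices are 0-based ordinals: the paper's index i in [N] corresponds to
   the ordinal i-1 : 'I_N.  The paper's e_{N,i} e_{N,j}^T is delta_mx (i-1) (j-1),
   and the paper's 2n+1-i corresponds to rev_ord. *)

Notation F := 'F_2.

Definition Rmx (N : nat) : 'M[F]_N :=
  \sum_(i < N) delta_mx i (rev_ord i).

Definition symplectic (N : nat) (C : 'M[F]_N) : bool :=
  C^T *m Rmx N *m C == Rmx N.

Definition in_BP (N : nat) (B : 'M[F]_N) : bool :=
  [forall i : 'I_N, forall j : 'I_N,
     (i <= j)%N ==> (B i j == (i == j)%:R)] && symplectic B.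

Definition Smx (N : nat) (v : 'cV[F]_N) (k : 'I_N) : 'M[F]_N :=
  1%:M + v *m (delta_mx k 0 : 'cV[F]_N)^T
       + Rmx N *m (delta_mx k 0 : 'cV[F]_N) *m v^T *m Rmx N
       + v (rev_ord k) 0 *: delta_mx (rev_ord k) k.

Lemma leq_n_2n (n : nat) : (n <= 2 * n)%N.
Proof. by rewrite mul2n -addnn leq_addr. Qed.

Definition ordL (n : nat) (j : 'I_n) : 'I_(2 * n) := widen_ord (leq_n_2n n) j.

(* V_n(B): column j (0-based) keeps rows r with j < r <= 2n-1-j (0-based),
   i.e. paper rows j+1 .. 2n+1-j in 1-based indexing. *)
Definition Vn (n : nat) (B : 'M[F]_(2 * n)) : 'M[F]_(2 * n, n) :=
  \matrix_(r < 2 * n, j < n)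
     (if ((j < r)%N && (r + j < 2 * n)%N) then B r (ordL j) else 0).

From HB Require Import structures.
From mathcomp Require Import all_boot all_order all_algebra.
From mathcomp Require Import zify ring.
Set Implicit Arguments. Unset Strict Implicit. Unset Printing Implicit Defensive.
Import GRing.Theory.
Local Open Scope ring_scope.

(* Write f = e_{2n+1-i}.  When v is supported in rows i+1 .. 2n+1-i,
   S_{2n,v,i} = 1 + M R with M = v f^T + f v^T + v_{2n+1-i} f f^T symmetric;
   v and f span an isotropic plane of the alternating form x^T R y, so
   M R M = 0 and, in characteristic 2, 1 + M R is symplectic.  It is also
   lower unitriangular, so the product P of the S's lies in the group
   B_{2n}(P_{2n}).  An element of this group fixing e_1 .. e_n is the
   identity (the symplectic relation forces its last n rows), so B = P as
   soon as their first n columns agree.  For column j: the factors S_t with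
   t > j fix e_j, S_j sends e_j to column j of B cut off after row 2n+1-j,
   and each S_t with t < j restores the entry of row 2n+1-t, its value being
   forced by the symplectic relation between columns t and j of B. *)

Section UnipotentForm.

Variables (R : comNzRingType) (N : nat) (J : 'M[R]_N).
Hypotheses (char2 : 2 \in [pchar R]) (symJ : J^T = J).

Lemma unipotent_isometry (M : 'M[R]_N) :
  M^T = M -> M *m J *m M = 0 ->
  (1%:M + M *m J)^T *m J *m (1%:M + M *m J) = J.
Proof.
move=> symM MJM0.
have twice0 (X : 'M[R]_N) : X + X = 0.
  by apply/matrixP => i j; rewrite !mxE addrr_pchar2.
have -> : (1%:M + M *m J)^T = 1%:M + J *m M.
  by rewrite [LHS](linearD trmx) /= trmx1 trmx_mul symJ symM.
rewrite mulmxDl mulmxDr !mul1mx !mulmx1 mulmxDl -!mulmxA.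
rewrite (mulmxA M J) (mulmxA (M *m J) M) MJM0 mul0mx !mulmx0 addr0.
by rewrite -addrA twice0 addr0.
Qed.

Lemma isotropic_rank2_nil (x y : 'cV[R]_N) (c : R) :
  x^T *m J *m x = 0 -> y^T *m J *m y = 0 -> x^T *m J *m y = 0 ->
  let M := x *m y^T + y *m x^T + c *: (y *m y^T) in M *m J *m M = 0.
Proof.
move=> xx yy xy M.
have yx : y^T *m J *m x = 0.
  by have := congr1 trmx xy; rewrite !trmx_mul trmxK symJ trmx0 mulmxA.
have JM0 (z : 'cV_N) : z^T *m J *m x = 0 -> z^T *m J *m y = 0 -> z^T *m J *m M = 0.
  move=> zx zy; rewrite /M !mulmxDr -!scalemxAr !mulmxA zx zy.
  by rewrite !mul0mx scaler0 !addr0.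
rewrite {1}/M !mulmxDl -!scalemxAl -!mulmxA !(mulmxA _ J M) !JM0 //.
by rewrite !mulmx0 scaler0 !addr0.
Qed.

End UnipotentForm.

Section Reversal.

Variable N : nat.
Implicit Types i j k : 'I_N.

Lemma eq_rev_ord i j : (i == rev_ord j) = (j == rev_ord i).
Proof. by apply/eqP/eqP => ->; rewrite rev_ordK. Qed.

Lemma rev_ord_eq i j : (rev_ord i == j) = (i == rev_ord j).
Proof. by rewrite eq_sym eq_rev_ord. Qed.

Lemma Rmx_entry i j : Rmx N i j = (j == rev_ord i)%:R.
Proof.
rewrite /Rmx summxE (bigD1 i) //= mxE eqxx big1 ?addr0 // => l /negbTE.
by rewrite mxE eq_sym => ->.
Qed.

Lemma mul_Rmx_mx m (A : 'M[F]_(N, m)) i (j : 'I_m) :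
  (Rmx N *m A) i j = A (rev_ord i) j.
Proof.
rewrite mxE (bigD1 (rev_ord i)) //= Rmx_entry eqxx mul1r big1 ?addr0 // => l.
by rewrite Rmx_entry => /negbTE ->; rewrite mul0r.
Qed.

Lemma mul_mx_Rmx m (A : 'M[F]_(m, N)) (i : 'I_m) j :
  (A *m Rmx N) i j = A i (rev_ord j).
Proof.
rewrite mxE (bigD1 (rev_ord j)) //= Rmx_entry -eq_rev_ord eqxx mulr1.
rewrite big1 ?addr0 // => l.
by rewrite Rmx_entry -eq_rev_ord => /negbTE ->; rewrite mulr0.
Qed.

Lemma trmx_Rmx : (Rmx N)^T = Rmx N.
Proof. by apply/matrixP => i j; rewrite mxE !Rmx_entry eq_rev_ord. Qed.

Lemma mulmx_Rmx_Rmx : Rmx N *m Rmx N = 1%:M.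
Proof.
by apply/matrixP => i j; rewrite mul_mx_Rmx Rmx_entry mxE eq_rev_ord rev_ordK.
Qed.

Lemma mul_Rmx_delta k :
  Rmx N *m delta_mx k 0 = delta_mx (rev_ord k) 0 :> 'cV[F]_N.
Proof. by apply/matrixP => i j; rewrite mul_Rmx_mx !mxE rev_ord_eq. Qed.

Lemma tr_delta_mul_Rmx k :
  (delta_mx (rev_ord k) 0)^T *m Rmx N = (delta_mx k 0 : 'cV[F]_N)^T.
Proof. by rewrite -trmx_Rmx -trmx_mul mul_Rmx_delta rev_ordK. Qed.

End Reversal.

Lemma pchar_F2 : 2 \in [pchar F].
Proof. exact: pchar_Fp. Qed.

Definition sform N (x y : 'cV[F]_N) : F := (x^T *m Rmx N *m y) 0 0.

Section SymplecticForm.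

Variable N : nat.
Implicit Types (x y : 'cV[F]_N) (A : 'M[F]_N).

Lemma sformE x y : sform x y = \sum_c x c 0 * y (rev_ord c) 0.
Proof.
by rewrite /sform -mulmxA mxE; apply: eq_bigr => c _; rewrite mxE mul_Rmx_mx.
Qed.

Lemma tr_mul_Rmx_sform x y : x^T *m Rmx N *m y = (sform x y)%:M.
Proof. exact: mx11_scalar. Qed.

Lemma sform_eq0 x y : sform x y = 0 -> x^T *m Rmx N *m y = 0.
Proof. by move=> xy; rewrite tr_mul_Rmx_sform xy raddf0. Qed.

Lemma sform_delta_l (k : 'I_N) y : sform (delta_mx k 0) y = y (rev_ord k) 0.
Proof. by rewrite /sform trmx_delta -mulmxA -rowE mxE mul_Rmx_mx. Qed.

Lemma sform_delta_r x (k : 'I_N) : sform x (delta_mx k 0) = x (rev_ord k) 0.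
Proof. by rewrite /sform -mulmxA mul_Rmx_delta -colE !mxE. Qed.

Lemma symplectic_sform A a b :
  symplectic A -> sform (col a A) (col b A) = (b == rev_ord a)%:R.
Proof.
move=> /eqP SA; rewrite sformE -Rmx_entry -SA -mulmxA mxE.
by apply: eq_bigr => c _; rewrite mul_Rmx_mx !mxE.
Qed.

End SymplecticForm.

Lemma sform_self n (x : 'cV[F]_(2 * n)) : sform x x = 0.
Proof.
(* The terms of index c and rev_ord c coincide, and rev_ord has no fixed point. *)
rewrite sformE (bigID (fun c : 'I_(2 * n) => (c < n)%N)) /=.
rewrite [X in _ + X](reindex_inj rev_ord_inj) /=.
rewrite [X in _ + X](eq_bigl (fun c : 'I_(2 * n) => (c < n)%N)) => [|c].
  rewrite [X in _ + X](eq_bigr (fun c => x c 0 * x (rev_ord c) 0)) => [|c _].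
    exact: addrr_pchar2 pchar_F2 _.
  by rewrite rev_ordK mulrC.
by have := ltn_ord c; rewrite /=; lia.
Qed.

Definition lower_unitriangular N (A : 'M[F]_N) :=
  forall i j : 'I_N, (i <= j)%N -> A i j = (i == j)%:R.

Definition sympinv N (A : 'M[F]_N) := Rmx N *m A^T *m Rmx N.

Section UnitriangularSymplectic.

Variable N : nat.
Implicit Types A B : 'M[F]_N.

Lemma in_BPP A : reflect (lower_unitriangular A /\ symplectic A) (in_BP A).
Proof.
apply: (iffP andP) => -[L S]; split => //.
  by move=> i j ij; move/forallP/(_ i)/forallP/(_ j): L; rewrite ij => /eqP.
by apply/forallP => i; apply/forallP => j; apply/implyP => ij; rewrite L.
Qed.

Lemma lower_unitriangular_mul A B :
  lower_unitriangular A -> lower_unitriangular B -> lower_unitriangular (A *m B).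
Proof.
move=> LA LB i j ij; rewrite mxE (bigD1 i) //= LA // eqxx mul1r LB //.
rewrite big1 ?addr0 // => s si; case: (ltnP i s) => [lt_is|le_si].
  by rewrite LA ?(ltnW lt_is) // eq_sym (negbTE si) mul0r.
rewrite LB ?(leq_trans le_si) //; case: eqP => [sj|]; last by rewrite mulr0.
by rewrite -sj in ij; case/eqP: si; apply/val_inj/eqP; rewrite eqn_leq le_si ij.
Qed.

Lemma symplectic_mul A B : symplectic A -> symplectic B -> symplectic (A *m B).
Proof.
rewrite /symplectic trmx_mul => /eqP SA /eqP SB.
by rewrite !mulmxA -(mulmxA B^T) -(mulmxA B^T) SA SB.
Qed.

Lemma in_BP1 : in_BP (1%:M : 'M[F]_N).
Proof.
apply/in_BPP; split; first by move=> i j _; rewrite mxE.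
by rewrite /symplectic trmx1 mul1mx mulmx1.
Qed.

Lemma in_BP_mul A B : in_BP A -> in_BP B -> in_BP (A *m B).
Proof.
move=> /in_BPP[LA SA] /in_BPP[LB SB]; apply/in_BPP.
by split; [apply: lower_unitriangular_mul | apply: symplectic_mul].
Qed.

Lemma sympinv_entry A i j : sympinv A i j = A (rev_ord j) (rev_ord i).
Proof. by rewrite mul_mx_Rmx mul_Rmx_mx mxE. Qed.

Lemma mul_sympinv_mx A : symplectic A -> sympinv A *m A = 1%:M.
Proof. by move=> /eqP SA; rewrite -!mulmxA (mulmxA A^T) SA mulmx_Rmx_Rmx. Qed.

Lemma mul_mx_sympinv A : symplectic A -> A *m sympinv A = 1%:M.
Proof. by move/mul_sympinv_mx/mulmx1C. Qed.

Lemma in_BP_sympinv A : in_BP A -> in_BP (sympinv A).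
Proof.
move=> /in_BPP[LA SA]; apply/in_BPP; split.
  move=> i j ij; rewrite sympinv_entry LA; last by rewrite /=; lia.
  by rewrite (inj_eq rev_ord_inj) eq_sym.
rewrite /symplectic -{1}(eqP SA) !(mulmxA (sympinv A)^T) -(mulmxA _ A).
rewrite -trmx_mul.
by rewrite mul_mx_sympinv // trmx1 mul1mx mulmx1.
Qed.

End UnitriangularSymplectic.

Lemma in_BP_eq1 n (C : 'M[F]_(2 * n)) :
  in_BP C -> (forall j : 'I_(2 * n), (j < n)%N -> col j C = delta_mx j 0) ->
  C = 1%:M.
Proof.
move=> /in_BPP[LC SC] fixC; apply/matrixP => r b; rewrite mxE.
case: (ltnP b n) => [bn | nb].
  by have /matrixP/(_ r 0) := fixC b bn; rewrite !mxE andbT.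
case: (leqP r b) => [rb | br]; first exact: LC.
have an : (rev_ord r < n)%N by have := ltn_ord r; rewrite /=; lia.
have := symplectic_sform (rev_ord r) b SC.
rewrite fixC // sform_delta_l rev_ordK mxE => ->.
by rewrite eq_sym.
Qed.

Lemma in_BP_col_eq n (A B : 'M[F]_(2 * n)) :
  in_BP A -> in_BP B ->
  (forall j : 'I_(2 * n), (j < n)%N -> col j A = col j B) -> A = B.
Proof.
move=> BPA BPB eqAB; have SB : symplectic B by case/in_BPP: BPB.
have : sympinv B *m A = 1%:M.
  apply: in_BP_eq1 => [|j jn]; first exact: in_BP_mul (in_BP_sympinv BPB) BPA.
  by rewrite colE -mulmxA -colE eqAB // colE mulmxA mul_sympinv_mx // mul1mx.
by move=> C1; rewrite -[LHS]mul1mx -(mul_mx_sympinv SB) -mulmxA C1 mulmx1.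
Qed.

Section Transvection.

Variables (N : nat) (v : 'cV[F]_N) (k : 'I_N).
Local Notation e i := (delta_mx i 0 : 'cV[F]_N).

Lemma SmxE : Smx v k = 1%:M + (v *m (e (rev_ord k))^T + e (rev_ord k) *m v^T
  + v (rev_ord k) 0 *: (e (rev_ord k) *m (e (rev_ord k))^T)) *m Rmx N.
Proof.
have eT : (e k)^T = (e (rev_ord k))^T *m Rmx N by rewrite tr_delta_mul_Rmx.
have dk : delta_mx (rev_ord k) k = e (rev_ord k) *m (e k)^T.
  by rewrite trmx_delta mul_delta_mx.
by rewrite /Smx mul_Rmx_delta dk eT !mulmxDl !mulmxA !scalemxAl !addrA.
Qed.

Lemma Smx_mulmx x : Smx v k *m x =
  x + x k 0 *: v + (sform v x + v (rev_ord k) 0 * x k 0) *: e (rev_ord k).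
Proof.
rewrite SmxE mulmxDl mul1mx -mulmxA !mulmxDl -!scalemxAl -!mulmxA.
rewrite !(mulmxA _ (Rmx N) x) !tr_mul_Rmx_sform !mul_mx_scalar.
rewrite sform_delta_l rev_ordK.
by rewrite scalerA scalerDl !addrA.
Qed.

Lemma lower_unitriangular_Smx :
  (k < rev_ord k)%N -> (forall r : 'I_N, (r <= k)%N -> v r 0 = 0) ->
  lower_unitriangular (Smx v k).
Proof.
move=> k_lt_k' v_low i j ij; have /matrixP/(_ i 0) := colE j (Smx v k).
rewrite Smx_mulmx sform_delta_r !mxE !andbT => ->.
case: (eqVneq k j) => [kj | _]; last case: (eqVneq i (rev_ord k)) => [ik | _] /=.
- rewrite -kj in ij *; rewrite (v_low i) //.
  have -> : (i == rev_ord k) = false.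
    by apply/eqP => ik; move: ij k_lt_k'; rewrite ik; lia.
  by rewrite /=; ring.
- rewrite (v_low (rev_ord j)); first by ring.
  by move: ij (ltn_ord j); rewrite ik /=; lia.
- by ring.
Qed.

End Transvection.

Lemma symplectic_Smx n (v : 'cV[F]_(2 * n)) (k : 'I_(2 * n)) :
  v k 0 = 0 -> k != rev_ord k -> symplectic (Smx v k).
Proof.
move=> vk0 kk'; rewrite /symplectic SmxE.
set y := delta_mx (rev_ord k) 0; set c := v (rev_ord k) 0.
apply/eqP/unipotent_isometry; [exact: pchar_F2 | exact: trmx_Rmx | |].
  by rewrite !linearD /= linearZ /= !trmx_mul !trmxK [y *m v^T + _]addrC.
apply: isotropic_rank2_nil; [exact: trmx_Rmx | apply: sform_eq0 ..].
- exact: sform_self.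
- by rewrite sform_delta_r rev_ordK mxE (negbTE kk').
- by rewrite sform_delta_r rev_ordK.
Qed.

Lemma big_mulmx_telescope (R : pzSemiRingType) N n (A : 'I_n -> 'M[R]_N)
    (x : nat -> 'cV[R]_N) :
  (forall t : 'I_n, A t *m x t.+1 = x t) ->
  \big[@mulmx R N N N / 1%:M]_(t < n) A t *m x n = x 0%N.
Proof.
elim: n A x => [|n IHn] A x Ax; first by rewrite big_ord0 mul1mx.
rewrite big_ord_recl -mulmxA (IHn _ (fun t => x t.+1)) => [|t].
  exact: Ax.
exact: Ax (lift ord0 t).
Qed.

Definition col_trunc N (A : 'M[F]_N) (j : 'I_N) (t : nat) : 'cV[F]_N :=
  \col_r (if (r + t < N)%N then A r j else 0).

Lemma col_trunc0 N (A : 'M[F]_N) j : col_trunc A j 0 = col j A.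
Proof. by apply/matrixP => r c; rewrite !mxE addn0 ltn_ord. Qed.

Section VnColumns.

Variables (n : nat) (B : 'M[F]_(2 * n)).
Local Notation S t := (Smx (col t (Vn B)) (ordL t)).
Local Notation e i := (delta_mx i 0 : 'cV[F]_(2 * n)).

Lemma Vn_entry (t : 'I_n) r :
  col t (Vn B) r 0 = if ((t < r) && (r + t < 2 * n))%N then B r (ordL t) else 0.
Proof. by rewrite !mxE. Qed.

Lemma in_BP_Smx_Vn t : in_BP (S t).
Proof.
have tn := ltn_ord t; apply/in_BPP; split.
  apply: lower_unitriangular_Smx => [|r rt]; first by rewrite /=; lia.
  by rewrite Vn_entry ltnNge rt.
apply: symplectic_Smx; first by rewrite Vn_entry ltnn.
by apply/eqP => /(congr1 val) /=; lia.
Qed.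

Lemma Smx_Vn_fix (t j : 'I_n) : (j < t)%N -> S t *m e (ordL j) = e (ordL j).
Proof.
move=> jt; rewrite Smx_mulmx sform_delta_r Vn_entry mxE -val_eqE /= gtn_eqF //.
have -> : (2 * n - j.+1 + t < 2 * n)%N = false by have := ltn_ord j; lia.
by rewrite andbF scale0r mulr0 !addr0 scale0r addr0.
Qed.

Lemma Smx_Vn_diag (j : 'I_n) :
  lower_unitriangular B -> S j *m e (ordL j) = col_trunc B (ordL j) j.
Proof.
move=> LB; rewrite Smx_mulmx sform_delta_r mxE !eqxx scale1r mulr1.
rewrite addrr_pchar2 ?pchar_F2 // scale0r addr0; apply/matrixP => r c.
rewrite (ord1 c) !mxE andbT -val_eqE /=; case: (ltngtP r j) => [rj | jr | rj].
- rewrite add0r; case: ifP => // _.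
  by rewrite LB ?(ltnW rj) // -val_eqE /= ltn_eqF.
- by rewrite add0r.
- have -> : r = ordL j by apply: val_inj.
  have -> : (ordL j + j < 2 * n)%N by have := ltn_ord j; rewrite /=; lia.
  by rewrite LB // eqxx addr0.
Qed.

Lemma sform_Vn_col_trunc (t j : 'I_n) : in_BP B -> (t < j)%N ->
  sform (col t (Vn B)) (col_trunc B (ordL j) t.+1) = B (rev_ord (ordL t)) (ordL j).
Proof.
move=> /in_BPP[LB SB] tj; have := symplectic_sform (ordL t) (ordL j) SB.
have -> : (ordL j == rev_ord (ordL t)) = false.
  by rewrite -val_eqE /=; have := ltn_ord j; lia.
rewrite !sformE (eq_bigr (fun c =>
    col t (Vn B) c 0 * col_trunc B (ordL j) t.+1 (rev_ord c) 0
    + (if c == ordL t then B (rev_ord (ordL t)) (ordL j) else 0))) => [|c _].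
  rewrite big_split /= -big_mkcond big_pred1_eq => /eqP.
  by rewrite addr_eq0 (oppr_pchar2 pchar_F2) => /eqP.
have := ltn_ord c; rewrite Vn_entry !mxE -val_eqE /=.
case: (ltngtP c t) => [ct | tc | ct] c2n.
- by rewrite LB ?(ltnW ct) // -val_eqE /= ltn_eqF // !mul0r addr0.
- have -> : (2 * n - c.+1 + t.+1 < 2 * n)%N by lia.
  rewrite addr0; case: ifP => // /negbT ct2n.
  rewrite (LB (rev_ord c)) /=; last by lia.
  by rewrite -val_eqE /= ltn_eqF ?mulr0 ?mul0r //; lia.
- have -> : c = ordL t by apply: val_inj.
  by rewrite LB // eqxx mul1r mul0r add0r.
Qed.

Lemma Smx_Vn_col_trunc (t j : 'I_n) : in_BP B -> (t < j)%N ->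
  S t *m col_trunc B (ordL j) t.+1 = col_trunc B (ordL j) t.
Proof.
move=> BB tj; have [LB _] := in_BPP _ BB.
rewrite Smx_mulmx sform_Vn_col_trunc //.
have -> : col_trunc B (ordL j) t.+1 (ordL t) 0 = 0.
  rewrite mxE; case: ifP => // _.
  by rewrite LB /= ?(ltnW tj) // -val_eqE /= ltn_eqF.
rewrite scale0r mulr0 !addr0.
apply/matrixP => r c; rewrite (ord1 c) !mxE andbT.
have := ltn_ord t; case: (eqVneq r (rev_ord (ordL t))) => [-> | rt] tn /=.
  have -> : (2 * n - t.+1 + t.+1 < 2 * n)%N = false by lia.
  have -> : (2 * n - t.+1 + t < 2 * n)%N by lia.
  by rewrite add0r mulr1.
rewrite mulr0 addr0 (_ : r + t.+1 < 2 * n = (r + t < 2 * n))%N //.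
by move: rt (ltn_ord r); rewrite -val_eqE /= => /eqP ? ?; apply/idP/idP; lia.
Qed.

End VnColumns.

Theorem theorem1 (n : nat) (B : 'M['F_2]_(2 * n)) :
  in_BP B ->
  B = \big[@mulmx 'F_2 (2 * n) (2 * n) (2 * n) / 1%:M]_(j < n)
        Smx (col j (Vn B)) (ordL j).
Proof.
move=> BB; set P := \big[_/_]_(j < n) _.
have BP : in_BP P.
  rewrite /P; elim/big_ind: _ => [|A C|t _]; first exact: in_BP1.
    exact: in_BP_mul.
  exact: in_BP_Smx_Vn.
apply: (in_BP_col_eq BB BP) => j0 jn; pose j := Ordinal jn.
have -> : j0 = ordL j by apply: val_inj.
pose x t := if (j < t)%N then delta_mx (ordL j) 0 else col_trunc B (ordL j) t.
(* x t is the image of e_j under the partial product S_t ... S_(n-1). *)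
have step (t : 'I_n) : Smx (col t (Vn B)) (ordL t) *m x t.+1 = x t.
  rewrite /x; case: (ltngtP j t) => [jt | tj | /val_inj jt]; rewrite ltnS.
  - by rewrite ltnW // Smx_Vn_fix.
  - by rewrite leqNgt tj /= Smx_Vn_col_trunc.
  - by rewrite -jt leqnn Smx_Vn_diag //; case/in_BPP: BB.
have := big_mulmx_telescope step.
by rewrite /x ltn_ord ltn0 col_trunc0 => <-; rewrite colE.
Qed.
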